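(* Let $X$ be a Hausdorff locally compact space. If $X$ is homeomorphic to the topological coproduct of an infinite family of compact spaces, then $X$ has infinitely many pairwise non-equivalent compactifications.
   Context: A compactification of $X$ is a compact Hausdorff space containing $X$ as a dense subspace; two compactifications are equivalent if there is a homeomorphism between them restricting to the identity on $X$. *)

From HB Require Import structures.
From mathcomp Require Import all_boot all_order all_algebra.
From mathcomp Require Import all_classical all_reals all_analysis.
Set Implicit Arguments. Unset Strict Implicit. Unset Printing Implicit Defensive.
Local Open Scope classical_set_scope.

Definition homeomorphism {A B : topologicalType} (f : A -> B) : Prop :=
  exists g : B -> A, [/\ continuous f, continuous g, cancel f g & cancel g f].

Definition homeomorphic (A B : topologicalType) : Prop :=
  exists f : A -> B, homeomorphism f.

Definition embedding {X K : topologicalType} (e : X -> K) : Prop :=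
  [/\ continuous e, injective e &
      forall U : set X, open U ->
        exists V : set K, open V /\ e @` U = V `&` range e].

Definition compactification {X K : topologicalType} (e : X -> K) : Prop :=
  [/\ compact [set: K], hausdorff_space K, embedding e & dense (range e)].

Definition equiv_compactification {X K1 K2 : topologicalType}
  (e1 : X -> K1) (e2 : X -> K2) : Prop :=
  exists h : K1 -> K2, homeomorphism h /\ (forall x, h (e1 x) = e2 x).

From HB Require Import structures.
From mathcomp Require Import all_boot all_order all_algebra.
From mathcomp Require Import all_classical all_reals all_analysis.
From mathcomp Require Import finmap.
Local Open Scope classical_set_scope.

(* Write X as the disjoint union of the nonempty compact open pieces given by
   the summands, indexed by the infinite set I.  For each n, split I into n+1
   infinite classes and adjoin n+1 points to X, the k-th one being the limit of
   the pieces of class k: its neighbourhoods contain all but finitely many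
   pieces of that class.  The result is a compact Hausdorff space in which X is
   dense, with a remainder of n+1 points.  An equivalence of compactifications
   fixes X pointwise, so it maps remainder into remainder injectively; hence
   different n give non-equivalent compactifications. *)

Lemma infinite_set_inj_nat {T : Type} {A : set T} (p : nat -> T) :
  injective p -> (forall t, A (p t)) -> infinite_set A.
Proof.
move=> p_inj Ap finA; apply: infinite_nat.
have -> : [set: nat] = p @^-1` A by apply/seteqP; split => // t _; exact: Ap.
by apply: finite_preimage => // t u _ _; exact: p_inj.
Qed.

Lemma inj_nat_of_infinite_set {T : choiceType} :
  infinite_set [set: T] -> exists p : nat -> T, injective p.
Proof.
elim/choicePpointed: T => T; first by rewrite emptyE.
move=> /infiniteP /pcard_injP [p p_inj]; exists p => t u.
exact/p_inj/in_setT/in_setT.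
Qed.

Lemma infinite_classes {T : choiceType} (n : nat) : infinite_set [set: T] ->
  exists cls : T -> 'I_n.+1, forall k, infinite_set (cls @^-1` [set k]).
Proof.
move=> /inj_nat_of_infinite_set [p p_inj].
exists (fun x => inord ('pinv_(fun=> 0%N) [set: nat] p x %% n.+1)) => k.
apply: (infinite_set_inj_nat (fun t => p (k + n.+1 * t)%N)).
  by move=> t u /p_inj /addnI /eqP; rewrite eqn_mul2l => /eqP.
move=> t /=; rewrite pinvKV ?in_setT //; last by move=> ? ? _ _; exact: p_inj.
by apply/val_inj; rewrite /= addnC mulnC modnMDl modn_small // inordK.
Qed.

Section Coproduct.
Context {I : choiceType} {Y : I -> topologicalType}.

Lemma open_projT1_preimage (P : set I) : open (@projT1 _ Y @^-1` P).
Proof.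
apply/sigT_openP => i; have [Pi|nPi] := pselect (P i).
  by rewrite (_ : _ @^-1` _ = setT); [exact: openT|apply/seteqP; split].
by rewrite (_ : _ @^-1` _ = set0); [exact: open0|apply/seteqP; split].
Qed.

Lemma compact_projT1_fiber {i : I} :
  compact [set: Y i] -> compact (@projT1 _ Y @^-1` [set i]).
Proof.
move=> cYi; rewrite (_ : _ @^-1` _ = existT Y i @` setT).
  apply: continuous_compact cYi.
  exact/continuous_subspaceT/existT_continuous.
by apply/seteqP; split => [[j y] /= <-|_ [y _ <-]] //; exists y.
Qed.

End Coproduct.

Lemma compact_preimage_homeomorphism {A B : topologicalType} {f : A -> B}
    {S : set B} :
  homeomorphism f -> compact S -> compact (f @^-1` S).
Proof.
move=> [g [_ cg fK gK]] cS; rewrite (_ : f @^-1` S = g @` S).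
  by apply: continuous_compact cS; exact/continuous_subspaceT.
by apply/seteqP; split => [x Sfx|_ [y Sy <-]]; [exists (f x)|rewrite /= gK].
Qed.

Lemma leq_card_inr {T : Type} {A B : finType} {h : T + A -> T + B} :
  injective h -> (forall x, h (inl x) = inl x) -> (#|A| <= #|B|)%N.
Proof.
move=> h_inj h_inl.
have h_inr a : {b | h (inr a) = inr b}.
  case E: (h (inr a)) => [x|b]; last by exists b.
  by move: E; rewrite -h_inl => /h_inj.
apply: (@leq_card _ _ (fun a => sval (h_inr a))) => a a' eq_aa'.
have : h (inr a) = h (inr a').
  by rewrite (svalP (h_inr a)) (svalP (h_inr a')) eq_aa'.
by move/h_inj => [].
Qed.

(* [piece] and [cls] are phantom parameters: they determine the topology
   declared on this type below. *)
Definition multipoint {X J : Type} (piece : X -> J) {n : nat}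
  (cls : J -> 'I_n.+1) : Type := (X + 'I_n.+1)%type.

Section Multipoint.
Variables (X : topologicalType) (J : choiceType) (piece : X -> J) (n : nat).
Variable cls : J -> 'I_n.+1.
Local Notation K := (multipoint piece cls).

HB.instance Definition _ := Choice.on K.
HB.instance Definition _ := isPointed.Build K (inr ord0).

Definition multipoint_open (U : set K) : Prop :=
  open (inl @^-1` U : set X) /\ forall k, U (inr k) ->
    exists s : seq J,
      forall x, cls (piece x) = k -> piece x \notin s -> U (inl x).

Lemma multipoint_openT : multipoint_open setT.
Proof. by split; [exact: openT | exists [::]]. Qed.

Lemma multipoint_openI : setI_closed multipoint_open.
Proof.
move=> A B [oA nearA] [oB nearB]; split; first exact: openI.
move=> k [/nearA [s As] /nearB [t Bt]]; exists (s ++ t) => x xk.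
by rewrite mem_cat negb_or => /andP[xs xt]; split; [exact: As | exact: Bt].
Qed.

Lemma multipoint_open_bigcup (I : Type) (F : I -> set K) :
  (forall i, multipoint_open (F i)) -> multipoint_open (\bigcup_i F i).
Proof.
move=> oF; split.
  by rewrite preimage_bigcup; apply: bigcup_open => i _; case: (oF i).
move=> k [i _ /(oF i).2 [s Fi]]; exists s => x xk xs; exists i => //.
exact: Fi.
Qed.

HB.instance Definition _ :=
  isOpenTopological.Build K
    multipoint_openT multipoint_openI multipoint_open_bigcup.

Definition saturated (P : set J) (Q : set 'I_n.+1) : set K :=
  fun z => match z with inl x => P (piece x) | inr k => Q k end.

Lemma setI_saturated P Q P' Q' :
  saturated P Q `&` saturated P' Q' = saturated (P `&` P') (Q `&` Q').
Proof. by apply/seteqP; split => -[]. Qed.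

Lemma saturated0 : saturated set0 set0 = set0.
Proof. by apply/seteqP; split => -[]. Qed.

Definition class_with_point k := saturated (cls @^-1` [set k]) [set k].

Hypothesis open_piece_preimage : forall P : set J, open (piece @^-1` P).

Lemma open_saturated (s : seq J) P Q :
  (forall j, Q (cls j) -> j \notin s -> P j) -> open (saturated P Q).
Proof.
move=> PQ; split=> [|k Qk]; first exact: open_piece_preimage.
by exists s => x xk; apply: PQ; rewrite xk.
Qed.

Lemma open_inl (U : set X) : open U -> open (inl @` U : set K).
Proof.
move=> oU; split=> [|k [] //].
rewrite (_ : _ @^-1` _ = U) //.
by apply/seteqP; split => [x [y Uy [<-]]|x Ux] //; exists x.
Qed.

Lemma inl_continuous : continuous (inl : X -> K).
Proof. by apply/continuousP => A []. Qed.

Lemma separate_inl_inr x k : exists2 AB : set K * set K,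
  (inl x \in AB.1 /\ inr k \in AB.2) &
  [/\ open AB.1, open AB.2 & AB.1 `&` AB.2 == set0].
Proof.
exists (saturated [set piece x] set0, saturated [set~ piece x] [set k]).
  by split; apply/mem_set.
split; first exact: (open_saturated [::]).
  by apply: (open_saturated [:: piece x]) => j _; rewrite inE => /eqP.
by rewrite setI_saturated setICr set0I saturated0.
Qed.

Hypothesis hausdorffX : hausdorff_space X.

Lemma multipoint_hausdorff : hausdorff_space K.
Proof.
move: hausdorffX; rewrite !open_hausdorff => hX [x|j] [y|k] neq.
- have xy : x != y by apply: contra_neq neq => ->.
  have [[U V] /= [/set_mem Ux /set_mem Vy] [oU oV /eqP UV0]] := hX x y xy.
  exists (inl @` U, inl @` V).
    by split; apply/mem_set; [exists x|exists y].
  split; [exact: open_inl|exact: open_inl|apply/eqP/seteqP; split=> //].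
  move=> _ /= [[a Ua <-] [b Vb]] [ba].
  have : (U `&` V) a by split => //; rewrite -ba.
  by rewrite UV0.
- exact: separate_inl_inr.
- have [[A B] /= [Ax Bj] [oA oB AB0]] := separate_inl_inr y j.
  by exists (B, A); [split | rewrite setIC].
- exists (class_with_point j, class_with_point k).
    by split; apply/mem_set.
  split; [exact: (open_saturated [::])|exact: (open_saturated [::])|].
  apply/eqP/seteqP; split => // -[a|a] [/= -> kj];
  by move: neq; rewrite kj eqxx.
Qed.

Hypothesis compact_piece : forall j, compact (piece @^-1` [set j]).

Lemma compact_pieces (F : set J) : finite_set F -> compact (piece @^-1` F).
Proof.
move=> /finite_seqP [s ->].
rewrite (_ : _ @^-1` _ = \bigcup_(j in [set` s]) piece @^-1` [set j]).
  by rewrite bigcup_seq; exact: bigsetU_compact.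
by apply/seteqP; split => [x sx|x [j sj /= ->]] //; exists (piece x).
Qed.

Lemma compact_class_with_point k : compact (class_with_point k).
Proof.
rewrite compact_cover => I D f f_open cover_f.
(* The member of the cover containing [inr k] misses only finitely many pieces
   of class k, and these form a compact subset of X. *)
have [i0 Di0 fi0k] := cover_f (inr k) erefl.
have [s near_k] := (f_open i0 Di0).2 k fi0k.
have : compact (inl @` (piece @^-1` ([set` s] `&` cls @^-1` [set k])) : set K).
  apply: continuous_compact; first exact/continuous_subspaceT/inl_continuous.
  exact/compact_pieces/finite_setIl/finite_seq.
rewrite compact_cover => /(_ I D f f_open) [_ [x [_ xk] <-]|D' D'D cover_D'].
  exact: cover_f.
exists (i0 |` D')%fset => [i|].
  by rewrite !inE => /orP[/eqP ->|/D'D //]; exact: mem_set.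
move=> [x /= xk|_ ->]; last by exists i0 => //=; rewrite !inE eqxx.
have [xs|xNs] := boolP (piece x \in s).
  have [i D'i fi_x] := cover_D' (inl x) (ex_intro2 _ _ x (conj xs xk) erefl).
  by exists i => //=; rewrite !inE D'i orbT.
by exists i0; [rewrite /= !inE eqxx | exact: near_k].
Qed.

Lemma multipoint_compact : compact [set: K].
Proof.
suff -> : [set: K] = \big[setU/set0]_(k <- enum 'I_n.+1) class_with_point k.
  by apply: bigsetU_compact => k _; exact: compact_class_with_point.
rewrite -bigcup_seq; apply/seteqP; split => // -[x|k] _.
  by exists (cls (piece x)); rewrite /= ?mem_enum.
by exists k; rewrite /= ?mem_enum.
Qed.

Lemma inl_embedding : embedding (inl : X -> K).
Proof.
split=> [||U oU]; [exact: inl_continuous | by move=> x y [] |].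
exists (inl @` U); split; first exact: open_inl.
by apply/seteqP; split => [_ [x Ux <-]|z []]; first by split; exists x.
Qed.

Hypothesis piece_surj : forall j, exists x, piece x = j.
Hypothesis infinite_cls : forall k, infinite_set (cls @^-1` [set k]).

Lemma dense_range_inl : dense (range (inl : X -> K)).
Proof.
move=> O [[x|k] Oz] [oO near_inr].
  by exists (inl x); split => //; exists x.
have [s Os] := near_inr k Oz.
have [j [/= jk /negP jNs]] :=
  infinite_setN0 (infinite_setD (infinite_cls k) (finite_seq s)).
have [x xj] := piece_surj j.
by exists (inl x); split; [apply: Os; rewrite xj | exists x].
Qed.

Lemma multipoint_compactification : compactification (inl : X -> K).
Proof.
split; [exact: multipoint_compact | exact: multipoint_hausdorff |
        exact: inl_embedding | exact: dense_range_inl].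
Qed.

End Multipoint.

Theorem mainTheorem6 (X : topologicalType)
  (hX : hausdorff_space X) (lcX : locally_compact [set: X])
  (I : choiceType) (Y : I -> topologicalType)
  (hI : infinite_set [set: I])
  (cY : forall i, compact [set: Y i])
  (neY : forall i, [set: Y i] !=set0)
  (hom : homeomorphic X {i : I & Y i}) :
  exists (K : nat -> topologicalType) (e : forall n, X -> K n),
    (forall n, compactification (e n)) /\
    (forall m n, m <> n -> ~ equiv_compactification (e m) (e n)).
Proof.
have [f f_homeo] := hom; have [g [f_cont _ fK gK]] := f_homeo.
pose piece x := projT1 (f x).
have open_piece P : open (piece @^-1` P).
  exact: (continuousP _).1 f_cont _ (open_projT1_preimage P).
have compact_piece i : compact (piece @^-1` [set i]).
  exact: compact_preimage_homeomorphism f_homeo (compact_projT1_fiber (cY i)).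
have piece_surj i : exists x, piece x = i.
  by have [y _] := neY i; exists (g (existT _ i y)); rewrite /piece gK.
pose cls n := sval (cid (infinite_classes n hI)).
exists (fun n => Topological.clone (multipoint piece (cls n)) _).
exists (fun n => inl).
split=> [n|m n neq_mn [h [[h' [_ _ hK h'K]] h_inl]]].
  exact: multipoint_compactification (svalP (cid (infinite_classes n hI))).
have h'_inl x : h' (inl x) = inl x by rewrite -(h_inl x) hK.
have := leq_card_inr (can_inj hK) h_inl.
have := leq_card_inr (can_inj h'K) h'_inl.
rewrite !card_ord => le_nm le_mn; apply: neq_mn; apply/eqP.
by rewrite -eqSS eqn_leq le_nm le_mn.
Qed.
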